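(* Let $(\mathbf{x}_t,y_t)_{t\ge0}$ be i.i.d. copies of $(\mathbf{x},y)\in\mathbb{R}^d\times\{\pm1\}$ with, almost surely, $\|\mathbf{x}\|\le1$ and $y\mathbf{x}^\top\mathbf{w}_*\ge\gamma$ for some $\gamma>0$ and unit vector $\mathbf{w}_*$. Let $L_t(\mathbf{w}):=\ln(1+\exp(-y_t\mathbf{x}_t^\top\mathbf{w}))$ and run $\mathbf{w}_{t+1}=\mathbf{w}_t-\eta\nabla L_t(\mathbf{w}_t)$ with $\eta>0$ and any $\mathbf{w}_0$. For any $\mathbf{u}_1$, with $\mathbf{u}_2=\frac{\eta}{2\gamma}\mathbf{w}_*$ and $\mathbf{u}=\mathbf{u}_1+\mathbf{u}_2$, almost surely for every $t\ge1$, \[\frac{\|\mathbf{w}_t-\mathbf{u}\|^2}{2\eta t}+\frac1t\sum_{k=0}^{t-1}L_k(\mathbf{w}_k)\le\frac1t\sum_{k=0}^{t-1}L_k(\mathbf{u}_1)+\frac{\|\mathbf{w}_0-\mathbf{u}\|^2}{2\eta t}.\] *)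

From HB Require Import structures.
From mathcomp Require Import all_boot all_order all_algebra.
From mathcomp Require Import all_classical all_reals all_analysis.
Set Implicit Arguments. Unset Strict Implicit. Unset Printing Implicit Defensive.
Import Order.TTheory GRing.Theory Num.Theory.
Import numFieldNormedType.Exports.
Local Open Scope classical_set_scope.
Local Open Scope ring_scope.

Definition dotv {R : comNzRingType} {d : nat} (u v : 'rV[R]_d) : R := (u *m v^T) 0 0.
Definition enorm {R : rcfType} {d : nat} (v : 'rV[R]_d) : R := Num.sqrt (dotv v v).

Definition logloss {R : realType} {d : nat} (x : 'rV[R]_d) (y : R) (w : 'rV[R]_d) : R :=
  ln (1 + expR (- (y * dotv x w))).

Definition grad {R : realType} {d : nat} (f : 'rV[R]_d -> R) (w : 'rV[R]_d) : 'rV[R]_d :=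
  \row_i ('D_(delta_mx 0 i) f w).

Fixpoint gd_iter {R : realType} {d : nat} (eta : R) (w0 : 'rV[R]_d)
  (L : nat -> 'rV[R]_d -> R) (t : nat) : 'rV[R]_d :=
  match t with
  | 0 => w0
  | t'.+1 => gd_iter eta w0 L t' - eta *: grad (L t') (gd_iter eta w0 L t')
  end.

Definition sample_event {T : Type} {R : realType} {d : nat}
  (X : nat -> T -> 'rV[R]_d) (Y : nat -> T -> R) (i : nat)
  (A : set R) (B : 'I_d -> set R) : set T :=
  [set w | A (Y i w) /\ forall j, B j (X i w 0 j)].

(* The samples (X t, Y t) are random variables (all coordinates measurable),
   mutually independent (product rule on measurable rectangles, a pi-system
   generating the Borel sigma-algebra of R^{d+1}), and identically distributed. *)
Definition iid_samples {dT : measure_display} {T : measurableType dT} {R : realType}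
  {d : nat} (P : probability T R) (X : nat -> T -> 'rV[R]_d) (Y : nat -> T -> R) : Prop :=
  [/\ (forall t, measurable_fun setT (Y t) /\
                 forall j, measurable_fun setT (fun w => X t w 0 j)),
      (forall (s : seq nat) (A : nat -> set R) (B : nat -> 'I_d -> set R),
          uniq s -> (forall i, measurable (A i)) -> (forall i j, measurable (B i j)) ->
          P (\bigcap_(i in [set` s]) sample_event X Y i (A i) (B i))
          = (\prod_(i <- s) P (sample_event X Y i (A i) (B i)))%E) &
      (forall t (A : set R) (B : 'I_d -> set R),
          measurable A -> (forall j, measurable (B j)) ->
          P (sample_event X Y t A B) = P (sample_event X Y 0 A B))].

From HB Require Import structures.
From mathcomp Require Import all_boot all_order all_algebra.
From mathcomp Require Import all_classical all_reals all_analysis.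
From mathcomp Require Import ring lra.
Set Implicit Arguments. Unset Strict Implicit. Unset Printing Implicit Defensive.
Import Order.TTheory GRing.Theory Num.Theory.
Import numFieldNormedType.Exports.
Local Open Scope classical_set_scope.
Local Open Scope ring_scope.

(* The bound holds along every sample path on which each sample satisfies
   [|x| <= 1], [y = +-1] and the margin condition.  With [s := 1 / (1 + exp (y x.w))] the step is
   [w' = w + eta s y x], so
     |w' - u|^2 = |w - u|^2 + 2 eta s y x.(w - u1) - eta^2 s y x.w*/gamma
                  + eta^2 s^2 |x|^2.
   Convexity of the logistic loss bounds the second term by
   [2 eta (L(u1) - L(w))], the margin makes the third at most [- eta^2 s], and
   [s <= 1] makes the last at most [eta^2 s]: the step towards [u2] absorbs
   the quadratic term of the gradient step.  Summing telescopes. *)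

Section dotv_algebra.
Variables (R : comNzRingType) (d : nat).
Implicit Types u v w : 'rV[R]_d.

Lemma dotvE u v : dotv u v = \sum_i u 0 i * v 0 i.
Proof. by rewrite /dotv !mxE; apply: eq_bigr => i _; rewrite mxE. Qed.

Lemma dotvC u v : dotv u v = dotv v u.
Proof. by rewrite !dotvE; apply: eq_bigr => i _; rewrite mulrC. Qed.

Lemma dotvDr u v w : dotv u (v + w) = dotv u v + dotv u w.
Proof. by rewrite !dotvE -big_split; apply: eq_bigr => i _; rewrite mxE mulrDr. Qed.

Lemma dotvDl u v w : dotv (v + w) u = dotv v u + dotv w u.
Proof. by rewrite dotvC dotvDr !(dotvC u). Qed.

Lemma dotvZr a u v : dotv u (a *: v) = a * dotv u v.
Proof. by rewrite !dotvE mulr_sumr; apply: eq_bigr => i _; rewrite mxE mulrCA. Qed.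

Lemma dotvZl a u v : dotv (a *: v) u = a * dotv v u.
Proof. by rewrite dotvC dotvZr dotvC. Qed.

Lemma dotvBr u v w : dotv u (v - w) = dotv u v - dotv u w.
Proof. by rewrite dotvDr -scaleN1r dotvZr mulN1r. Qed.

Lemma dotv_delta_mx v (i : 'I_d) : dotv v (delta_mx 0 i) = v 0 i.
Proof.
rewrite dotvE (bigD1 i) //= big1 ?addr0 => [|j ji]; rewrite mxE.
  by rewrite !eqxx mulr1.
by rewrite (negbTE ji) andbF mulr0.
Qed.

Lemma dotv_addZ_sqr v x a :
  dotv (v + a *: x) (v + a *: x) = dotv v v + 2 * a * dotv x v + a ^+ 2 * dotv x x.
Proof. by rewrite !dotvDl !dotvDr !dotvZl !dotvZr (dotvC v x); ring. Qed.

End dotv_algebra.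

Lemma dotv_ge0 (R : realDomainType) d (v : 'rV[R]_d) : 0 <= dotv v v.
Proof. by rewrite dotvE; apply: sumr_ge0 => i _; rewrite -expr2 sqr_ge0. Qed.

Lemma enorm_sqr (R : rcfType) d (v : 'rV[R]_d) : enorm v ^+ 2 = dotv v v.
Proof. by rewrite /enorm sqr_sqrtr // dotv_ge0. Qed.

Section logistic_loss.
Variable R : realType.

Lemma is_derive_softplus (z : R) :
  is_derive z 1 (fun z => ln (1 + expR z)) (expR z / (1 + expR z)).
Proof.
have inner : is_derive z 1 (fun z : R => 1 + expR z) (expR z).
  have := is_deriveD (@is_derive_cst R R^o R^o 1 z 1) (is_derive_expR z).
  by rewrite add0r.
have pos : 0 < 1 + expR z by rewrite addr_gt0 ?expR_gt0.
have := is_derive1_comp (f := @ln R) (g := fun z => 1 + expR z) (is_derive1_ln pos) inner.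
by rewrite mulrC.
Qed.

Lemma is_derive_softplus_affine (c b : R) :
  is_derive (0 : R) 1 (fun h : R => ln (1 + expR (c + h * b))) (expR c / (1 + expR c) * b).
Proof.
have affine : is_derive (0 : R) 1 (fun h : R => c + h * b) b.
  have -> : (fun h : R => c + h * b) = cst c + b \*: id.
    by apply/funext => h; rewrite /= mulrC.
  by apply: is_derive_eq; rewrite add0r; exact: mulr1.
have := is_derive1_comp (f := fun z => ln (1 + expR z)) (g := fun h => c + h * b)
  (is_derive_softplus (c + 0 * b)) affine.
by rewrite mul0r addr0.
Qed.

Lemma expRN_over_1DexpRN (a : R) : expR (- a) / (1 + expR (- a)) = (1 + expR a)^-1.
Proof.
have ea : expR a != 0 by rewrite gt_eqF ?expR_gt0.
have e1 : 1 + expR a != 0 by rewrite gt_eqF ?addr_gt0 ?expR_gt0.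
by rewrite expRN; field; rewrite e1 ea.
Qed.

Lemma grad_logloss d (x : 'rV[R]_d) (y : R) (w : 'rV[R]_d) :
  grad (logloss x y) w = - (y / (1 + expR (y * dotv x w))) *: x.
Proof.
apply/rowP => i; rewrite !mxE.
set c := - (y * dotv x w); set b := - (y * x 0 i).
have -> : 'D_(delta_mx 0 i) (logloss x y) w =
          'D_1 (fun h : R => ln (1 + expR (c + h * b))) 0.
  rewrite /derive; congr (lim (_ @ 0^')); apply/funext => h /=.
  rewrite /logloss /c /b dotvDr dotvZr dotv_delta_mx mul0r !addr0.
  have -> : h%:A = h :> R by rewrite /GRing.scale /= mulr1.
  by congr (_ *: (ln (1 + expR _) - _)); ring.
have derive_h := is_derive_softplus_affine c b.
rewrite derive_val /c expRN_over_1DexpRN /b.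
by rewrite mulrN mulNr mulrA [_^-1 * y]mulrC.
Qed.

Lemma expR_mulr_le (s t : R) : 0 <= s -> s <= 1 -> expR (s * t) <= 1 - s + s * expR t.
Proof.
move=> s0 s1; have := @convex_expR R (Itv01 s0 s1) t 0.
by rewrite !convRE /= mulr0 addr0 expR0 mulr1 addrC.
Qed.

Lemma softplusN_tangent (z z' : R) :
  ln (1 + expR (- z)) - (1 + expR z)^-1 * (z' - z) <= ln (1 + expR (- z')).
Proof.
set s := (1 + expR z)^-1.
have ez : 0 < expR z by rewrite expR_gt0.
have s0 : 0 < s by rewrite invr_gt0 addr_gt0.
have s1 : s <= 1 by rewrite invf_le1 ?addr_gt0 // lerDl ltW.
have factor : 1 + expR (- z') = (1 + expR (- z)) * (1 - s + s * expR (- (z' - z))).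
  rewrite /s !expRN expRD !expRN.
  have ez' : expR z' != 0 by rewrite gt_eqF ?expR_gt0.
  have ez0 : expR z != 0 by rewrite gt_eqF.
  have e1 : 1 + expR z != 0 by rewrite gt_eqF ?addr_gt0.
  by field; rewrite ez0 ez' e1.
have p1 : 0 < 1 + expR (- z) by rewrite addr_gt0 ?expR_gt0.
have p2 : 0 < 1 - s + s * expR (- (z' - z)).
  by rewrite ltr_wpDl ?subr_ge0 // mulr_gt0 ?expR_gt0.
rewrite factor lnM ?posrE // lerD2l -mulrN.
by rewrite -[X in X <= _]expRK ler_ln ?posrE ?expR_gt0 // expR_mulr_le // ltW.
Qed.

Lemma logloss_gd_step d (x w u1 wst : 'rV[R]_d) (y gamma eta : R) (u : 'rV[R]_d) :
  y ^+ 2 * dotv x x <= 1 -> gamma <= y * dotv x wst -> 0 < gamma -> 0 < eta ->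
  u = u1 + (eta / (2 * gamma)) *: wst ->
  dotv (w - eta *: grad (logloss x y) w - u) (w - eta *: grad (logloss x y) w - u)
    + 2 * eta * logloss x y w
    <= dotv (w - u) (w - u) + 2 * eta * logloss x y u1.
Proof.
move=> xy_le1 margin gamma_gt0 eta_gt0 ->.
set w' := w - eta *: _.
set k := eta / (2 * gamma); set s := (1 + expR (y * dotv x w))^-1.
have s0 : 0 <= s by rewrite invr_ge0 addr_ge0 ?expR_ge0.
have s1 : s <= 1 by rewrite invf_le1 ?addr_gt0 ?expR_gt0 // lerDl expR_ge0.
have k0 : 0 <= k by rewrite divr_ge0 ?mulr_ge0 // ltW.
have kgamma : k * gamma = eta / 2 by rewrite /k; field; rewrite gt_eqF.
have w'_sub_u : w' - (u1 + k *: wst) = (w - (u1 + k *: wst)) + (eta * s * y) *: x.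
  by rewrite /w' grad_logloss; apply/rowP => i; rewrite !mxE /s; ring.
have dot_step : dotv x (w - (u1 + k *: wst))
                = dotv x w - dotv x u1 - k * dotv x wst.
  by rewrite dotvBr dotvDr dotvZr opprD addrA.
have tangent : eta * s * (y * dotv x w - y * dotv x u1)
               <= eta * (logloss x y u1 - logloss x y w).
  have := softplusN_tangent (y * dotv x w) (y * dotv x u1).
  by rewrite -/s -mulrA ler_pM2l // /logloss; lra.
have margin_term : eta * s * (k * gamma) <= eta * s * k * (y * dotv x wst).
  by rewrite mulrA ler_wpM2l // mulr_ge0 // mulr_ge0 // ltW.
have quadratic_term : (eta * s * y) ^+ 2 * dotv x x <= eta ^+ 2 * s.
  have -> : (eta * s * y) ^+ 2 * dotv x x = eta ^+ 2 * s * (s * (y ^+ 2 * dotv x x)).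
    by ring.
  rewrite -[leRHS]mulr1; apply: ler_wpM2l; first by rewrite mulr_ge0 // exprn_ge0 // ltW.
  by rewrite -[1]mulr1; apply: ler_pM => //; rewrite mulr_ge0 ?sqr_ge0 ?dotv_ge0.
rewrite w'_sub_u dotv_addZ_sqr dot_step kgamma in margin_term *.
have -> : 2 * (eta * s * y) * (dotv x w - dotv x u1 - k * dotv x wst)
   = 2 * (eta * s * (y * dotv x w - y * dotv x u1)) - 2 * (eta * s * k * (y * dotv x wst)).
  by ring.
have : eta * s * (eta / 2) = eta ^+ 2 * s / 2 by ring.
lra.
Qed.

End logistic_loss.

Section logloss_gd_regret.
Variables (R : realType) (d : nat) (xs : nat -> 'rV[R]_d) (ys : nat -> R).
Variables (gamma eta : R) (wst w0 u1 u : 'rV[R]_d).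
Hypothesis samples :
  forall k, ys k ^+ 2 * dotv (xs k) (xs k) <= 1 /\ gamma <= ys k * dotv (xs k) wst.
Hypotheses (gamma_gt0 : 0 < gamma) (eta_gt0 : 0 < eta).
Hypothesis u_def : u = u1 + (eta / (2 * gamma)) *: wst.

Local Notation L k := (logloss (xs k) (ys k)).
Local Notation wt := (gd_iter eta w0 (fun k => L k)).

Lemma logloss_gd_regret t :
  dotv (wt t - u) (wt t - u) + 2 * eta * \sum_(k < t) L k (wt k)
    <= dotv (w0 - u) (w0 - u) + 2 * eta * \sum_(k < t) L k u1.
Proof.
elim: t => [|t IH]; first by rewrite !big_ord0 mulr0 !addr0.
have [xy_le1 margin] := samples t.
have := logloss_gd_step (wt t) xy_le1 margin gamma_gt0 eta_gt0 u_def.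
rewrite !big_ord_recr /=; lra.
Qed.

End logloss_gd_regret.

Theorem mainTheorem16 (R : realType) (dT : measure_display) (T : measurableType dT)
  (P : probability T R) (d : nat)
  (X : nat -> T -> 'rV[R]_d) (Y : nat -> T -> R)
  (gamma : R) (wstar : 'rV[R]_d) (eta : R) (w0 u1 : 'rV[R]_d) :
  iid_samples P X Y ->
  0 < gamma -> enorm wstar = 1 ->
  (forall t, {ae P, forall w, enorm (X t w) <= 1 /\ (Y t w = 1 \/ Y t w = -1) /\
                              gamma <= Y t w * dotv (X t w) wstar}) ->
  0 < eta ->
  let u := u1 + (eta / (2 * gamma)) *: wstar in
  {ae P, forall w, forall t : nat, (0 < t)%N ->
     let L := fun k => logloss (X k w) (Y k w) in
     let wt := gd_iter eta w0 L in
     enorm (wt t - u) ^+ 2 / (2 * eta * t%:R)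
       + (t%:R)^-1 * \sum_(k < t) L k (wt k)
     <= (t%:R)^-1 * \sum_(k < t) L k u1 + enorm (w0 - u) ^+ 2 / (2 * eta * t%:R)}.
Proof.
move=> _ gamma_gt0 _ samples eta_gt0 u.
apply: filterS (ae_foralln samples) => w sample_w t t_gt0 /=.
have samples_w k : Y k w ^+ 2 * dotv (X k w) (X k w) <= 1 /\
                   gamma <= Y k w * dotv (X k w) wstar.
  have [x_le1 [y_sign margin]] := sample_w k; split => //.
  have -> : Y k w ^+ 2 = 1 by case: y_sign => ->; rewrite ?sqrrN expr1n.
  by rewrite mul1r -enorm_sqr exprn_ile1 // sqrtr_ge0.
have regret := logloss_gd_regret w0 samples_w gamma_gt0 eta_gt0 (erefl u) t.
have c_gt0 : 0 < 2 * eta * t%:R by rewrite !mulr_gt0 // ltr0n.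
have average a s : a / (2 * eta * t%:R) + t%:R^-1 * s = (a + 2 * eta * s) / (2 * eta * t%:R).
  by field; rewrite !gt_eqF // ltr0n.
rewrite !enorm_sqr [leRHS]addrC !average.
by apply: ler_wpM2r; first rewrite invr_ge0 ltW.
Qed.
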